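(* Let $k\ge 2$ and $1\le l_1\le l_2\le\cdots\le l_k$ be integers. If the generalized theta graph $\Theta_{l_1,l_2,\dots,l_k}$ is cyclically orderable, then $$\frac{\sum_{i=1}^{t} l_i}{t-1}\ \ge\ \frac{\sum_{i=1}^{k} l_i}{k-1}$$ for every integer $t$ with $2\le t\le k$.
   Context: The generalized theta graph $\Theta_{l_1,\dots,l_k}$ (with $l_1\le\cdots\le l_k$) is the graph obtained by joining two distinct vertices by $k$ internally vertex-disjoint paths of lengths $l_1,l_2,\dots,l_k$. A cyclic base ordering (CBO) of a connected graph $G$ is a bijection $\mathcal{O}:E(G)\to\{1,\dots,|E(G)|\}$ such that for every $i\in\{1,\dots,|E(G)|\}$ the edges $\mathcal{O}^{-1}(i),\dots,\mathcal{O}^{-1}(i+|V(G)|-2)$ (indices taken cyclically modulo $|E(G)|$) induce a spanning tree of $G$; $G$ is cyclically orderable if it has a CBO. *)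

From mathcomp Require Import all_boot all_order all_algebra.
Set Implicit Arguments. Unset Strict Implicit. Unset Printing Implicit Defensive.

Section Graphs.
Variables (T E : finType) (VS : {set T}) (ends : E -> T * T).

Definition sadj (S : {set E}) : rel T :=
  fun x y => [exists e in S, (ends e == (x, y)) || (ends e == (y, x))].

Definition sub_connected (S : {set E}) : Prop :=
  forall x y, x \in VS -> y \in VS -> connect (sadj S) x y.

Definition sub_acyclic (S : {set E}) : Prop :=
  forall e, e \in S -> ~~ connect (sadj (S :\ e)) (ends e).1 (ends e).2.

Definition spanning_tree (S : {set E}) : Prop :=
  sub_connected S /\ sub_acyclic S.

(* O : E -> 'I_|E| bijection; the window starting at position i consists of the
   edges at positions i, i+1, ..., i+|V|-2 (cyclically mod |E|). *)
Definition cbo_window (O : E -> 'I_#|E|) (i : nat) : {set E} :=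
  [set e | (O e + #|E| - i) %% #|E| < #|VS| - 1].

Definition is_CBO (O : E -> 'I_#|E|) : Prop :=
  bijective O /\ forall i : 'I_#|E|, spanning_tree (cbo_window O i).

Definition cyclically_orderable : Prop := exists O : E -> 'I_#|E|, is_CBO O.

End Graphs.

(* Generalized theta graph Theta_{l_0,...,l_{k-1}}: two poles (inl false),
   (inl true) joined by k internally disjoint paths; path i has length l i,
   internal vertices inr (i, j) with 0 < j < l i. *)
Section Theta.
Variables (k : nat) (l : 'I_k -> nat).

Definition thM := (\max_(i < k) l i).+1.
Definition thT : finType := (bool + ('I_k * 'I_thM))%type.

Definition thVS : {set thT} :=
  [set x : thT | match x with
                 | inl _ => true
                 | inr p => (0 < p.2) && (p.2 < l p.1) end].

Definition thE : finType := {p : 'I_k * 'I_thM | p.2 < l p.1}.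

Definition thvert (i : 'I_k) (j : nat) : thT :=
  if j == 0 then inl false
  else if j == l i then inl true
  else inr (i, inord j).

Definition thends (e : thE) : thT * thT :=
  (thvert (val e).1 (val e).2, thvert (val e).1 (val e).2.+1).

Definition theta_cyclically_orderable : Prop :=
  cyclically_orderable thVS thends.

End Theta.

From mathcomp Require Import all_boot all_algebra.
From mathcomp Require Import zify.
Import GRing.Theory Num.Theory.

(* Every window of a cyclic base ordering is a spanning tree of the theta
   graph, so it has |V| - 1 = |E| - (k - 1) edges: each window misses exactly
   k - 1 edges, and each edge is missed by exactly k - 1 of the |E| windows.
   A spanning tree cannot contain two of the k paths (their union is a cycle),
   so every window misses at least t - 1 edges of the first t paths.  Counting
   the pairs (window, missed edge on the first t paths) in two ways gives
   |E| (t - 1) <= (l_1 + ... + l_t) (k - 1), with |E| = l_1 + ... + l_k. *)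

Lemma sum_ord_range_indicator (M a b : nat) :
  \sum_(j < M) ((a <= j < b) : nat) = minn b M - a.
Proof.
elim: M => [|M IH]; first by rewrite big_ord0; lia.
rewrite big_ord_recr /= IH.
by case: (ltnP M b) => hb; case: (leqP a M) => ha /=; lia.
Qed.

Lemma modn_cyclic_sub m a i : a < m -> i < m ->
  (a + m - i) %% m = if i <= a then a - i else a + m - i.
Proof.
move=> a_lt i_lt; case: ifP => i_le.
  have -> : a + m - i = a - i + m by lia.
  by rewrite modnDr modn_small //; lia.
by rewrite modn_small //; lia.
Qed.

Lemma sum_ord_cyclic_reflect m (a : 'I_m) (F : nat -> nat) :
  \sum_(i < m) F ((a + m - i) %% m) = \sum_(i < m) F i.
Proof.
have m_gt0 : 0 < m by case: a => a; case: m.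
pose h (i : 'I_m) : 'I_m := Ordinal (ltn_pmod (a + m - i) m_gt0).
have h_inj : injective h.
  move=> i j /(congr1 val) /=; rewrite !modn_cyclic_sub // => eq_ij.
  apply: ord_inj; have := ltn_ord a; have := ltn_ord i; have := ltn_ord j.
  by move: eq_ij; case: ifP => ?; case: ifP => ?; lia.
by rewrite [RHS](reindex_inj h_inj).
Qed.

Lemma sum_windows_notin (T E : finType) (VS : {set T}) (O : E -> 'I_#|E|) e :
  \sum_(i < #|E|) (e \notin cbo_window VS O i : nat) = #|E| - (#|VS| - 1).
Proof.
under eq_bigr do rewrite inE -leqNgt.
rewrite (sum_ord_cyclic_reflect _ (O e) (fun j => (#|VS| - 1 <= j : nat))).
under eq_bigr => j _ do rewrite -[_ <= _]andbT -(ltn_ord j).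
by rewrite sum_ord_range_indicator minnn.
Qed.

Lemma sadj_sym (T E : finType) (ends : E -> T * T) (S : {set E}) :
  symmetric (sadj ends S).
Proof. by move=> x y; apply: eq_existsb => e; rewrite orbC. Qed.

Section Theta.
Set Implicit Arguments. Unset Strict Implicit.

Variables (k : nat) (l : 'I_k -> nat).

Lemma ltn_thM i : l i < thM l.
Proof. by rewrite ltnS (leq_bigmax i). Qed.

Lemma sum_thE_by_path (F : 'I_k -> nat) :
  \sum_(e : thE l) F (val e).1 = \sum_i F i * l i.
Proof.
have /= <- :=
  big_sub_cond [pred p : 'I_k * 'I_(thM l) | p.2 < l p.1] xpredT (fun p => F p.1).
rewrite [RHS](eq_bigr (fun i => \sum_(j : 'I_(thM l) | j < l i) F i)).
  by rewrite pair_big_dep; apply: eq_bigl => -[i j]; rewrite inE andbT.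
move=> i _; rewrite big_mkcond /= (eq_bigr (fun j : 'I_(thM l) => (0 <= j < l i) * F i)).
  by rewrite -big_distrl sum_ord_range_indicator (minn_idPl (ltnW (ltn_thM i))) subn0 mulnC.
by move=> j _; rewrite leq0n; case: ifP => _; rewrite ?mul1n.
Qed.

Lemma card_thE : #|thE l| = \sum_i l i.
Proof.
rewrite -sum1_card (sum_thE_by_path (fun=> 1)).
by apply: eq_bigr => i _; rewrite mul1n.
Qed.

Lemma card_thVS : #|thVS l| = 2 + \sum_i (l i).-1.
Proof.
rewrite -sum1_card big_mkcond /= big_sumType /=; congr (_ + _).
  by rewrite (eq_bigr (fun=> 1)) ?sum_nat_const ?card_bool // => b _; rewrite inE.
rewrite (eq_bigr (fun p : 'I_k * 'I_(thM l) => (0 < p.2 < l p.1) : nat)); last first.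
  by move=> -[i j] _; rewrite inE.
rewrite -(pair_bigA _ (fun i (j : 'I_(thM l)) => (0 < j < l i) : nat)).
apply: eq_bigr => i _.
by rewrite sum_ord_range_indicator (minn_idPl (ltnW (ltn_thM i))) subn1.
Qed.

Local Notation thadj := (sadj (@thends k l)).

Lemma thedge_subproof p j : j < l p -> (inord j : 'I_(thM l)) < l p.
Proof. by move=> lt_j; rewrite inordK // (ltn_trans lt_j (ltn_thM p)). Qed.

Definition thedge p j (lt_j : j < l p) : thE l :=
  exist _ (p, inord j) (thedge_subproof lt_j).

Lemma thedge_pos p j (lt_j : j < l p) : (val (thedge lt_j)).2 = j :> nat.
Proof. by rewrite /= inordK // (ltn_trans lt_j (ltn_thM p)). Qed.

Lemma thends_thedge p j (lt_j : j < l p) :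
  thends (thedge lt_j) = (thvert l p j, thvert l p j.+1).
Proof. by rewrite /thends; have /= -> := thedge_pos lt_j. Qed.

Lemma connect_thvert (S : {set thE l}) p a b : a <= b <= l p ->
    (forall e : thE l, (val e).1 = p -> a <= (val e).2 < b -> e \in S) ->
  connect (thadj S) (thvert l p a) (thvert l p b).
Proof.
elim: b => [|b IH] /andP[le_ab le_bp] inS.
  by move: le_ab; rewrite leqn0 => /eqP->.
move: le_ab; rewrite leq_eqVlt => /orP[/eqP-> // | /ltnSE le_ab].
apply: connect_trans (IH _ _) _; first by rewrite le_ab ltnW.
  by move=> e ep /andP[le_a lt_b]; apply: inS; rewrite // le_a ltnS ltnW.
apply: connect1; apply/existsP; exists (thedge le_bp).
by rewrite thends_thedge eqxx inS // thedge_pos le_ab /=.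
Qed.

Definition path_subset (W : {set thE l}) p :=
  [forall e : thE l, ((val e).1 == p) ==> (e \in W)].

Hypothesis l_gt0 : forall i, 0 < l i.

Lemma thvert_end p : thvert l p (l p) = inl true.
Proof. by rewrite /thvert eqxx gtn_eqF. Qed.

(* Two paths inside W close a cycle through the first edge of one of them. *)
Lemma acyclic_path_subset_eq (W : {set thE l}) p q :
  sub_acyclic (@thends k l) W -> path_subset W p -> path_subset W q -> p = q.
Proof.
move=> acW Wp Wq; apply/eqP; apply: contraT => neq_pq.
set e0 := thedge (l_gt0 p).
have e0W : e0 \in W by have := forallP Wp e0; rewrite eqxx.
case/negP: (acW e0 e0W); rewrite thends_thedge /=.
have along_q : connect (thadj (W :\ e0)) (thvert l q 0) (thvert l q (l q)).
  apply: connect_thvert => [|e e_q _]; first by rewrite leqnn.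
  rewrite !inE (implyP (forallP Wq e)) ?e_q ?andbT //.
  by apply: contraNneq neq_pq => e_e0; rewrite -e_q e_e0.
have along_p : connect (thadj (W :\ e0)) (thvert l p 1) (thvert l p (l p)).
  apply: connect_thvert => [|e ep /andP[pos_e _]]; first by rewrite l_gt0 leqnn.
  rewrite !inE (implyP (forallP Wp e)) ?ep ?andbT //.
  by apply: contraTneq pos_e => ->; rewrite thedge_pos.
apply: connect_trans along_q _.
by rewrite thvert_end -(thvert_end p) (sym_connect_sym (@sadj_sym _ _ _ _)).
Qed.

Lemma acyclic_card_paths_missed (W : {set thE l}) (A : {set 'I_k}) :
    sub_acyclic (@thends k l) W ->
  #|A| - 1 <= \sum_(e : thE l | (val e).1 \in A) (e \notin W : nat).
Proof.
move=> acW; rewrite (partition_big (fun e : thE l => (val e).1) (mem A)) //=.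
set B := [set p in A | path_subset W p].
have B_le1 : #|B| <= 1.
  apply/card_le1_eqP => p q; rewrite !inE => /andP[_ Wp] /andP[_ Wq].
  exact: acyclic_path_subset_eq acW Wq Wp.
have AB_le1 : #|A :&: B| <= 1 := leq_trans (subset_leq_card (subsetIr A B)) B_le1.
rewrite (big_setID B) /= -(cardsID B A).
apply: leq_trans (leq_addl _ _); apply: (@leq_trans #|A :\: B|); first by lia.
rewrite -sum1_card; apply: leq_sum => p; rewrite !inE andbC => /andP[pA].
rewrite pA /= => /forallPn[e]; rewrite negb_imply => /andP[/eqP ep eW].
by rewrite (bigD1 e) ?ep ?pA ?eqxx //= eW.
Qed.

Lemma card_thE_subn_tree : #|thE l| - (#|thVS l| - 1) = k - 1.
Proof.
rewrite card_thE card_thVS.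
have -> : \sum_i l i = \sum_i (l i).-1 + k.
  rewrite -[X in _ + X]card_ord -sum1_card -big_split /=.
  by apply: eq_bigr => i _; rewrite addn1 prednK.
lia.
Qed.

Lemma cbo_double_count (O : thE l -> 'I_#|thE l|) (A : {set 'I_k}) :
    is_CBO (thVS l) (@thends k l) O ->
  #|thE l| * (#|A| - 1) <= (\sum_(i in A) l i) * (k - 1).
Proof.
move=> [_ trees].
have -> : #|thE l| * (#|A| - 1) = \sum_(i < #|thE l|) (#|A| - 1).
  by rewrite sum_nat_const card_ord.
apply: (@leq_trans (\sum_(i < #|thE l|) \sum_(e : thE l | (val e).1 \in A)
                     (e \notin cbo_window (thVS l) O i : nat))).
  by apply: leq_sum => i _; apply: acyclic_card_paths_missed (trees i).2.
rewrite exchange_big /= (eq_bigr (fun=> k - 1)) => [|e _]; last first.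
  by rewrite sum_windows_notin card_thE_subn_tree.
rewrite big_mkcond /= (sum_thE_by_path (fun i => if i \in A then k - 1 else 0)).
rewrite big_distrl [leqRHS]big_mkcond /=; apply/eq_leq/eq_bigr => i _.
by case: ifP => _; rewrite // mulnC.
Qed.
End Theta.

Theorem mainTheorem8 (k : nat) (l : 'I_k -> nat) :
  2 <= k ->
  (forall i, 1 <= l i) ->
  (forall i j : 'I_k, i <= j -> l i <= l j) ->
  theta_cyclically_orderable l ->
  forall t : nat, 2 <= t <= k ->
    ((\sum_(i < k) (l i)%:R) / (k.-1)%:R
       <= (\sum_(i < k | (i < t)%N) (l i)%:R) / (t.-1)%:R :> rat)%R.
Proof.
move=> k_ge2 l_gt0 _ [O cbo] t /andP[t_ge2 t_le_k].
pose A := [set i : 'I_k | i < t].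
have card_A : #|A| = t.
  rewrite -sum1_card big_mkcond /= (eq_bigr (fun i : 'I_k => (0 <= i < t) : nat)).
    by rewrite sum_ord_range_indicator (minn_idPl t_le_k) subn0.
  by move=> i _; rewrite inE; case: ifP.
have sum_A : \sum_(i in A) l i = \sum_(i < k | i < t) l i.
  by apply: eq_bigl => i; rewrite inE.
have := cbo_double_count l_gt0 A cbo; rewrite card_A sum_A card_thE !subn1 => count.
have k1_gt0 : (0 < (k.-1)%:R :> rat)%R by rewrite ltr0n -ltnS prednK // ltnW.
have t1_gt0 : (0 < (t.-1)%:R :> rat)%R by rewrite ltr0n -ltnS prednK // ltnW.
by rewrite -!natr_sum ler_pdivrMr // mulrAC ler_pdivlMr // -!natrM ler_nat.
Qed.
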